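(* Let ${\mathscr X}$ be a Hausdorff space and consider the set $M^1({\mathscr X})$ of Radon probability measures on ${\mathscr X}$ with the weak topology; assume $M^1({\mathscr X})$ is Hausdorff and that $P\mapsto P(A)$ is Borel measurable on $M^1({\mathscr X})$ for every Borel $A\subset{\mathscr X}$. Let $\Pi$ be a Borel probability measure on $M^1({\mathscr X})$ and let $G$ be its mean measure. Then $\{P\in M^1({\mathscr X}):P\ll G\}$ is closed in $M^1({\mathscr X})$ and the (weak) support of $\Pi$ satisfies $${\mathrm{supp}}(\Pi)\subset\{P\in M^1({\mathscr X}):P\ll G\}.$$
   Context: The weak topology on $M^1({\mathscr X})$ is the coarsest topology making $P\mapsto\int h\,dP$ continuous for every bounded Borel measurable $h:{\mathscr X}\to\mathbb{R}$. The mean measure of $\Pi$ is the Borel probability measure $G(A)=\int_{M^1({\mathscr X})}P(A)\,d\Pi(P)$. The support of $\Pi$ is the set of $P$ all of whose open neighbourhoods have positive $\Pi$-mass. *)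

From HB Require Import structures.
From mathcomp Require Import all_boot all_order all_algebra.
From mathcomp Require Import all_classical all_reals all_analysis.
From mathcomp Require Import measurable_realfun.
Set Implicit Arguments. Unset Strict Implicit. Unset Printing Implicit Defensive.
Import Order.TTheory GRing.Theory Num.Theory.
Import numFieldTopology.Exports numFieldNormedType.Exports.
Local Open Scope classical_set_scope.
Local Open Scope ring_scope.

Section WeakM1.
Context (R : realType) (X : ptopologicalType).

Definition borelX : Type := g_sigma_algebraType (@open X).

(* Radon probability measure: inner regular w.r.t. compact sets.
   (Local finiteness is automatic for a finite measure.  In the Hausdorff
   setting of the theorem, compact sets are closed hence Borel.) *)
Definition radon (P : probability borelX R) : Prop :=
  forall A : set borelX, measurable A ->
    P A = ereal_sup [set P K | K in
      [set K : set borelX | compact (K : set X) /\ K `<=` A]].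

Lemma dirac_radon (x : X) : radon (\d_(x : borelX) : probability borelX R).
Proof.
move=> A mA /=; apply: le_anti; apply/andP; split.
  have [Ax|nAx] := pselect (A x).
    apply: (@le_trans _ _ (\d_(x : borelX) [set x] : \bar R)).
      by rewrite !diracE (mem_set Ax) mem_set.
    apply: ereal_sup_ubound; exists [set x] => //; split.
    - exact: compact_set1.
    - by move=> y ->.
  apply: (@le_trans _ _ (\d_(x : borelX) set0 : \bar R)).
    by rewrite !diracE memNset// in_set0.
  apply: ereal_sup_ubound; exists set0 => //; split; [exact: compact0|by []].
apply: ge_ereal_sup => _ [K [_ KA] <-]; rewrite !diracE.
by case: (boolP (x \in K)) => [/set_mem/KA/mem_set ->|_] //; rewrite lee_fin.
Qed.

Definition M1 : Type := {P : probability borelX R | radon P}.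
HB.instance Definition _ := gen_eqMixin M1.
HB.instance Definition _ := gen_choiceMixin M1.
HB.instance Definition _ :=
  isPointed.Build M1 (exist _ _ (dirac_radon point)).

Definition bmfun : Type := {h : borelX -> R |
  measurable_fun setT h /\ exists M : R, forall x, `|h x| <= M}.

Definition integ (h : bmfun) (P : M1) : R :=
  fine (\int[sval P]_x ((sval h x)%:E)).

Definition weakM1 : Type :=
  sup_topology (fun h : bmfun => Topological.class (initial_topology (integ h))).

Definition borelM1 : Type := g_sigma_algebraType (@open weakM1).

Definition mean_measure (Pi : probability borelM1 R) : set borelX -> \bar R :=
  fun A => (\int[Pi]_(P in setT) ((sval (P : M1)) A))%E.

Definition supp (Pi : probability borelM1 R) : set weakM1 :=
  [set P | forall U : set weakM1, open U -> U P -> (0 < Pi U)%E].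

End WeakM1.

From HB Require Import structures.
From mathcomp Require Import all_boot all_order all_algebra.
From mathcomp Require Import all_classical all_reals all_analysis.
From mathcomp Require Import measurable_realfun.
Set Implicit Arguments. Unset Strict Implicit. Unset Printing Implicit Defensive.
Import Order.TTheory GRing.Theory Num.Theory.
Import numFieldTopology.Exports numFieldNormedType.Exports.
Local Open Scope classical_set_scope.
Local Open Scope ring_scope.

(* The map P |-> P(A) = \int 1_A dP is weakly continuous, so each
   [{P | P(A) = 0}] is closed, and the measures dominated by G form the
   intersection of these sets over the G-null Borel sets A.  If G(A) = 0, then
   \int Q(A) dPi(Q) = G(A) = 0 forces Q(A) = 0 for Pi-almost every Q, so the
   open set [{Q | Q(A) > 0}] is Pi-null and thus misses the support of Pi. *)

Lemma null_dominatesP d (T : semiRingOfSetsType d) (R : realType)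
    (m1 m2 : set T -> \bar R) :
  m1 `<< m2 <-> forall A, measurable A -> m2.-null_set A -> m1 A = 0%E.
Proof.
split=> [dom A mA /dom|dom N nN A mA AN]; first by apply.
by apply: dom mA _; exact: subset_null_set nN.
Qed.

Lemma ge0_integral_eq0_null d (T : measurableType d) (R : realType)
    (mu : {measure set T -> \bar R}) (f : T -> \bar R) :
  measurable_fun setT f -> (forall x, 0 <= f x)%E ->
  (\int[mu]_x f x = 0)%E -> mu.-null_set [set x | f x != 0%E].
Proof.
move=> mf f_ge0 intf0.
have [|N [mN muN0 fN]] := (ae_eq_integral_abs mu measurableT mf).1.
  by rewrite -intf0; apply: eq_integral => x _; rewrite gee0_abs.
move=> A mA Af0; apply/eqP; rewrite -measure_le0 -muN0.
apply: le_measure; rewrite ?inE // => x /Af0 fx0; apply: fN => /(_ I).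
exact/eqP.
Qed.

Section weak_topology.
Context (R : realType) (X : ptopologicalType).

Lemma integ_continuous (h : bmfun R X) : continuous (integ h : weakM1 R X -> R).
Proof.
move=> P; apply: cvg_trans (@initial_continuous _ _ (integ h) P).
apply: cvg_app.
have [to_sup _] := @cvg_sup _ _
  (fun h : bmfun R X => Topological.class (initial_topology (integ h)))
  (nbhs (P : weakM1 R X)) P (@nbhs_filter (weakM1 R X) P).
exact: to_sup (@cvg_id _ _) h.
Qed.

Definition indic_bmfun (A : set (borelX X)) (mA : measurable A) : bmfun R X.
Proof.
exists (\1_A : borelX X -> R); split; first exact: measurable_indic.
by exists 1 => x; rewrite indicE; case: (x \in A); rewrite ?normr1 ?normr0.
Defined.

Lemma measure_continuous (A : set (borelX X)) : measurable A ->
  continuous (fun P : weakM1 R X => fine (sval (P : M1 R X) A)).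
Proof.
move=> mA; have -> : (fun P : weakM1 R X => fine (sval (P : M1 R X) A)) =
    integ (indic_bmfun mA).
  by apply: funext => P; rewrite /integ /= integral_indic // setIT.
exact: integ_continuous.
Qed.

Lemma closed_measure_eq0 (A : set (borelX X)) : measurable A ->
  closed [set P : weakM1 R X | sval (P : M1 R X) A = 0%E].
Proof.
move=> mA; have -> : [set P : weakM1 R X | sval (P : M1 R X) A = 0%E] =
    (fun P : weakM1 R X => fine (sval (P : M1 R X) A)) @^-1` [set 0].
  apply/seteqP; split=> P /= /eqP PA0; apply/eqP;
    by move: PA0; rewrite fine_eq0 // fin_num_measure.
apply: preimage_closed; last exact: closed_eq.
by move=> P _; exact: measure_continuous.
Qed.

Lemma open_measure_gt0 (A : set (borelX X)) : measurable A ->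
  open [set P : weakM1 R X | (0 < sval (P : M1 R X) A)%E].
Proof.
move=> mA; have -> : [set P : weakM1 R X | (0 < sval (P : M1 R X) A)%E] =
    (fun P : weakM1 R X => fine (sval (P : M1 R X) A)) @^-1` [set x | x > 0].
  apply/seteqP; split=> P /=;
    by rewrite -lte_fin fineK // fin_num_measure.
apply: open_comp; last exact: open_gt.
by move=> P _; exact: measure_continuous.
Qed.

End weak_topology.

Theorem mainTheorem4 (R : realType) (X : ptopologicalType) :
  hausdorff_space X ->
  hausdorff_space (weakM1 R X) ->
  (forall A : set (borelX X), measurable A ->
     measurable_fun [set: borelM1 R X] (fun P : borelM1 R X => sval (P : M1 R X) A)) ->
  forall Pi : probability (borelM1 R X) R,
    closed [set P : weakM1 R X | sval (P : M1 R X) `<< mean_measure Pi] /\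
    supp Pi `<=` [set P : weakM1 R X | sval (P : M1 R X) `<< mean_measure Pi].
Proof.
move=> _ _ measurable_eval Pi; split.
  have -> : [set P : weakM1 R X | sval (P : M1 R X) `<< mean_measure Pi] =
      \bigcap_(A in [set A | measurable A /\ (mean_measure Pi).-null_set A])
        [set P : weakM1 R X | sval (P : M1 R X) A = 0%E].
    apply/seteqP; split=> P /=.
      by move=> /null_dominatesP dom A [mA nA]; exact: dom.
    by move=> dom; apply/null_dominatesP => A mA nA; exact: dom.
  by apply: closed_bigI => A [mA _]; exact: closed_measure_eq0.
move=> P suppP; apply/null_dominatesP => A mA nA.
have PiA_null : Pi.-null_set [set Q : borelM1 R X | sval (Q : M1 R X) A != 0%E].
  apply: ge0_integral_eq0_null; [exact: measurable_eval|by []|].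
  exact: nA A mA (@subset_refl _ _).
apply/eqP; rewrite eq_le measure_ge0 andbT leNgt; apply/negP => PA_gt0.
have U_open := open_measure_gt0 R mA.
have mU : measurable ([set Q : weakM1 R X | (0 < sval (Q : M1 R X) A)%E]
    : set (borelM1 R X)) by exact: sub_gen_smallest.
have := suppP _ U_open PA_gt0.
by rewrite (PiA_null _ mU) ?ltxx // => Q /= QA_gt0; rewrite gt_eqF.
Qed.
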